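(* For all positive integers $t,n_s,n_b,K,|\Pi|$, all $\epsilon\in(0,1]$, $\delta\in(0,1)$, $\alpha>0$ and $\Delta\ge 0$, $$\min_{\lambda\in\{0,1\}}G_t(\lambda,\alpha,\Delta)\ \le\ \sqrt{2}\,\min_{\lambda\in[0,1]}G_t(\lambda,\alpha,\Delta).$$
   Context: Here $K$ is the number of actions, $|\Pi|$ the size of a finite policy class, $n_s$ the number of warm-start examples, $n_b$ the number of interaction rounds, $\epsilon$ an exploration parameter and $\delta$ a confidence parameter. Writing $L=\ln\frac{8n_b|\Pi|}{\delta}$, define for $\lambda\in[0,1]$ $$V_t(\lambda)=2\sqrt{\Big(\lambda^2\frac{Kt}{\epsilon}+(1-\lambda)^2n_s\Big)L}+\Big(\frac{\lambda K}{\epsilon}+(1-\lambda)\Big)L,$$ $$G_t(\lambda,\alpha,\Delta)=\frac{(1-\lambda)n_s\Delta+2V_t(\lambda)}{\lambda t+(1-\lambda)n_s\alpha}.$$ *)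

From Stdlib Require Import Reals.
Open Scope R_scope.

Definition Lconst (nb Pi : nat) (delta : R) : R :=
  ln (8 * INR nb * INR Pi / delta).

Definition Vt (t ns nb K Pi : nat) (eps delta lam : R) : R :=
  2 * sqrt ((lam ^ 2 * (INR K * INR t / eps) + (1 - lam) ^ 2 * INR ns)
            * Lconst nb Pi delta)
  + (lam * INR K / eps + (1 - lam)) * Lconst nb Pi delta.

Definition Gt (t ns nb K Pi : nat) (eps delta lam alpha Delta : R) : R :=
  ((1 - lam) * INR ns * Delta + 2 * Vt t ns nb K Pi eps delta lam)
  / (lam * INR t + (1 - lam) * INR ns * alpha).

(* Write G_t(lam) = N(lam) / D(lam).  The denominator D is affine in lam, so
   the weighted mediant ((1-lam) N(0) + lam N(1)) / D(lam) dominates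
   min (G_t(0), G_t(1)).  In the numerator every term except the square root is
   affine in lam with nonnegative coefficients, and for the square root
   Cauchy-Schwarz gives
     lam sqrt a + (1-lam) sqrt b <= sqrt 2 * sqrt (lam^2 a + (1-lam)^2 b),
   hence (1-lam) N(0) + lam N(1) <= sqrt 2 * N(lam). *)

From Stdlib Require Import Reals Lra Lia.
Open Scope R_scope.

Lemma sqrt2_ge_1 : 1 <= sqrt 2.
Proof. rewrite <- sqrt_1. apply sqrt_le_1_alt. lra. Qed.

Lemma Rmix_pos (x0 x1 lam : R) :
  0 < x0 -> 0 < x1 -> 0 <= lam <= 1 -> 0 < (1 - lam) * x0 + lam * x1.
Proof. intros; nra. Qed.

Lemma Rmin_le_mediant (N0 N1 D0 D1 lam : R) :
  0 < D0 -> 0 < D1 -> 0 <= lam <= 1 ->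
  Rmin (N0 / D0) (N1 / D1)
  <= ((1 - lam) * N0 + lam * N1) / ((1 - lam) * D0 + lam * D1).
Proof.
  intros HD0 HD1 Hlam.
  set (m := Rmin (N0 / D0) (N1 / D1)).
  assert (Hm0 : m * D0 <= N0).
  { apply Rmult_le_reg_r with (/ D0); [now apply Rinv_0_lt_compat|].
    rewrite Rmult_assoc, Rinv_r by lra. rewrite Rmult_1_r. apply Rmin_l. }
  assert (Hm1 : m * D1 <= N1).
  { apply Rmult_le_reg_r with (/ D1); [now apply Rinv_0_lt_compat|].
    rewrite Rmult_assoc, Rinv_r by lra. rewrite Rmult_1_r. apply Rmin_r. }
  pose proof (Rmix_pos D0 D1 lam HD0 HD1 Hlam) as HD.
  apply Rmult_le_reg_r with ((1 - lam) * D0 + lam * D1); [exact HD|].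
  unfold Rdiv. rewrite Rmult_assoc, Rinv_l, Rmult_1_r by lra.
  nra.
Qed.

Lemma sqrt_mix_le (a b lam : R) :
  0 <= a -> 0 <= b ->
  lam * sqrt a + (1 - lam) * sqrt b
  <= sqrt 2 * sqrt (lam ^ 2 * a + (1 - lam) ^ 2 * b).
Proof.
  intros Ha Hb.
  set (u := lam * sqrt a + (1 - lam) * sqrt b).
  rewrite <- sqrt_mult_alt by lra.
  apply Rle_trans with (Rabs u); [apply Rle_abs|].
  rewrite <- sqrt_Rsqr_abs. apply sqrt_le_1_alt.
  assert (Hsa : sqrt a * sqrt a = a) by now apply sqrt_sqrt.
  assert (Hsb : sqrt b * sqrt b = b) by now apply sqrt_sqrt.
  assert (0 <= (lam * sqrt a - (1 - lam) * sqrt b) ^ 2) by apply pow2_ge_0.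
  unfold u, Rsqr. nra.
Qed.

Lemma Lconst_pos (nb Pi : nat) (delta : R) :
  (0 < nb)%nat -> (0 < Pi)%nat -> 0 < delta < 1 -> 0 < Lconst nb Pi delta.
Proof.
  intros Hnb HPi Hdelta. unfold Lconst.
  rewrite <- ln_1. apply ln_increasing; [lra|].
  assert (1 <= INR nb) by (apply (le_INR 1); lia).
  assert (1 <= INR Pi) by (apply (le_INR 1); lia).
  apply Rmult_lt_reg_r with delta; [lra|].
  unfold Rdiv. rewrite Rmult_assoc, Rinv_l, Rmult_1_r by lra.
  nra.
Qed.

Lemma Vt_mix_le (t ns nb K Pi : nat) (eps delta lam : R) :
  0 < eps -> 0 <= Lconst nb Pi delta -> 0 <= lam <= 1 ->
  (1 - lam) * Vt t ns nb K Pi eps delta 0 + lam * Vt t ns nb K Pi eps delta 1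
  <= sqrt 2 * Vt t ns nb K Pi eps delta lam.
Proof.
  intros Heps HL Hlam. unfold Vt.
  set (L := Lconst nb Pi delta) in *.
  set (A := INR K * INR t / eps).
  set (c := INR K / eps).
  assert (HA : 0 <= A).
  { apply Rle_mult_inv_pos; [apply Rmult_le_pos; apply pos_INR | exact Heps]. }
  assert (Hc : 0 <= c) by (apply Rle_mult_inv_pos; [apply pos_INR | exact Heps]).
  assert (Hns : 0 <= INR ns) by apply pos_INR.
  replace (0 ^ 2 * A + (1 - 0) ^ 2 * INR ns) with (INR ns) by ring.
  replace (1 ^ 2 * A + (1 - 1) ^ 2 * INR ns) with A by ring.
  replace (0 * INR K / eps) with 0 by (field; lra).
  replace (1 * INR K / eps) with c by (unfold c; field; lra).
  replace (lam * INR K / eps) with (lam * c) by (unfold c; field; lra).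
  replace ((lam ^ 2 * A + (1 - lam) ^ 2 * INR ns) * L)
    with (lam ^ 2 * (A * L) + (1 - lam) ^ 2 * (INR ns * L)) by ring.
  pose proof (sqrt_mix_le (A * L) (INR ns * L) lam) as Hsqrt.
  assert (Hs : 0 <= sqrt (lam ^ 2 * (A * L) + (1 - lam) ^ 2 * (INR ns * L)))
    by apply sqrt_pos.
  pose proof sqrt2_ge_1.
  assert (0 <= (lam * c + (1 - lam)) * L) by (apply Rmult_le_pos; nra).
  assert (HAL : 0 <= A * L) by nra.
  assert (HnsL : 0 <= INR ns * L) by nra.
  specialize (Hsqrt HAL HnsL).
  nra.
Qed.

Theorem mainTheorem3 :
  forall (t ns nb K Pi : nat) (eps delta alpha Delta : R),
    (0 < t)%nat -> (0 < ns)%nat -> (0 < nb)%nat -> (0 < K)%nat -> (0 < Pi)%nat ->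
    0 < eps <= 1 -> 0 < delta < 1 -> 0 < alpha -> 0 <= Delta ->
    forall lam : R, 0 <= lam <= 1 ->
      Rmin (Gt t ns nb K Pi eps delta 0 alpha Delta)
           (Gt t ns nb K Pi eps delta 1 alpha Delta)
      <= sqrt 2 * Gt t ns nb K Pi eps delta lam alpha Delta.
Proof.
  intros t ns nb K Pi eps delta alpha Delta Ht Hns Hnb HK HPi Heps Hdelta
    Halpha HDelta lam Hlam.
  apply lt_0_INR in Ht, Hns.
  pose proof (Lconst_pos nb Pi delta Hnb HPi Hdelta) as HL.
  pose proof (Vt_mix_le t ns nb K Pi eps delta lam (proj1 Heps) (Rlt_le _ _ HL)
    Hlam) as HV.
  pose proof sqrt2_ge_1.
  assert (Hnsa : 0 < INR ns * alpha) by (apply Rmult_lt_0_compat; lra).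
  unfold Gt.
  set (D := lam * INR t + (1 - lam) * INR ns * alpha).
  assert (HD : 0 < D).
  { replace D with ((1 - lam) * (INR ns * alpha) + lam * INR t)
      by (unfold D; ring).
    now apply Rmix_pos. }
  eapply Rle_trans; [apply Rmin_le_mediant with (lam := lam); nra|].
  replace ((1 - lam) * (0 * INR t + (1 - 0) * INR ns * alpha)
           + lam * (1 * INR t + (1 - 1) * INR ns * alpha)) with D
    by (unfold D; ring).
  unfold Rdiv. rewrite <- Rmult_assoc.
  apply Rmult_le_compat_r.
  - now apply Rlt_le, Rinv_0_lt_compat.
  - assert (0 <= (1 - lam) * INR ns * Delta) by
      (apply Rmult_le_pos; [apply Rmult_le_pos|]; lra).
    nra.
Qed.
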